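(* Let $p>0$ be a prime and let $(S,\mathfrak{n},K)$ be a standard graded $F$-finite regular ring of characteristic $p$ (i.e. a polynomial ring over an $F$-finite field $K$ with homogeneous maximal ideal $\mathfrak{n}$). Let $I\subseteq S$ be a homogeneous ideal such that $R=S/I$ is $F$-pure, and let $\mathfrak{m}=\mathfrak{n}R$. Then $\mathcal{P}(R)=\mathfrak{m}$ if and only if $(I^{[p^e]}:I)\subseteq(\mathfrak{n}^{[p^e]}:\mathfrak{n})$ for all $e\geq 0$.
   Context: For an ideal $J$, $J^{[p^e]}$ is the ideal generated by $p^e$-th powers of elements of $J$. $F$-pure: the Frobenius map is pure. $I_e(R)=\{r\in R:\varphi(r^{1/p^e})\in\mathfrak{m}\text{ for all }\varphi\in\operatorname{Hom}_R(R^{1/p^e},R)\}$ and the splitting prime is $\mathcal{P}(R)=\bigcap_e I_e(R)$. *)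

From HB Require Import structures.
From mathcomp Require Import all_boot all_order all_algebra.
From mathcomp Require Import mpoly.
Set Implicit Arguments. Unset Strict Implicit. Unset Printing Implicit Defensive.
Import GRing.Theory.
Local Open Scope ring_scope.

Definition frob_power (A : comNzRingType) (q : nat) (J : A -> Prop) : A -> Prop :=
  fun f => exists s : seq (A * A),
    (forall x, x \in s -> J x.2) /\ f = \sum_(x <- s) x.1 * x.2 ^+ q.

Definition colon (A : comNzRingType) (J L : A -> Prop) : A -> Prop :=
  fun f => forall g, L g -> J (f * g).

Definition subideal (A : comNzRingType) (J L : A -> Prop) : Prop :=
  forall f, J f -> L f.

Definition homog_comp (K : fieldType) (n d : nat) (f : {mpoly K[n]}) : {mpoly K[n]} :=
  \sum_(m <- msupp f | mdeg m == d) f@_m *: 'X_[m].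

Definition homogeneous_ideal (K : fieldType) (n : nat) (I : {mpoly K[n]} -> Prop) : Prop :=
  forall f d, I f -> I (homog_comp d f).

Definition hmax (K : fieldType) (n : nat) : {mpoly K[n]} -> Prop :=
  fun f => f@_0%MM = 0.

Definition Ffinite_field (p : nat) (K : fieldType) : Prop :=
  exists s : seq K, forall x : K, exists c : seq K,
    size c = size s /\ x = \sum_(i < size s) c`_i ^+ p * s`_i.

(* phi in Hom_R(R^{1/q}, R), identifying R^{1/q} with R: r . y^{1/q} = (r^q y)^{1/q} *)
Definition frob_hom (R : comNzRingType) (q : nat) (phi : R -> R) : Prop :=
  (forall x y, phi (x + y) = phi x + phi y) /\
  (forall r x, phi (r ^+ q * x) = r * phi x).

Definition Ie (R : comNzRingType) (p e : nat) (m : R -> Prop) : R -> Prop :=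
  fun r => forall phi, frob_hom (p ^ e) phi -> m (phi r).

Definition splitting_prime (R : comNzRingType) (p : nat) (m : R -> Prop) : R -> Prop :=
  fun r => forall e, Ie p e m r.

(* F-pure: the Frobenius R -> R^{1/p} is a pure map of R-modules, expressed by
   the standard criterion for purity of a module map M -> N: every finite
   R-linear system with constants from M solvable in N is solvable in M.
   For F : R -> R^{1/p}, a system sum_j a_ij y_j = F(c_i) in R^{1/p} reads
   sum_j a_ij^p y_j = c_i^p in R. *)
Definition Fpure (R : comNzRingType) (p : nat) : Prop :=
  forall (a b : nat) (A : 'M[R]_(a, b)) (c : 'cV[R]_a),
    (exists y : 'cV[R]_b, map_mx (fun x => x ^+ p) A *m y = map_mx (fun x => x ^+ p) c) ->
    exists x : 'cV[R]_b, A *m x = c.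

From HB Require Import structures.
From mathcomp Require Import all_boot all_order all_algebra.
From mathcomp Require Import mpoly.
From mathcomp Require Import ring zify.
From Stdlib Require Import IndefiniteDescription Classical.
Set Implicit Arguments. Unset Strict Implicit. Unset Printing Implicit Defensive.
Import GRing.Theory.
Local Open Scope ring_scope.

(* Write q = p^e. The polynomial ring S is a finite free module over S^q, and
   Hom_S(S^{1/q}, S) is generated by one map T, so every q^{-1}-linear map of S
   is T(u * _). Such a map preserves I exactly when u lies in (I^[q] : I)
   (Fedder), maps of S preserving I are exactly the lifts of q^{-1}-linear maps
   of R = S/I, and preserving n characterizes (n^[q] : n). Hence m ⊆ I_e(R) is
   the inclusion (I^[q] : I) ⊆ (n^[q] : n), while P(R) ⊆ I_0(R) ⊆ m always
   (take the identity). The free basis of S over S^p consists of the x^a s_j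
   with 0 <= a_i < p and s_j a p-basis of the F-finite field K; the dual
   elements x^{(p-1)-a} d_j come from a Gram matrix over K, and composing
   gives q = p^e. *)

Section FrobeniusLinear.
Variables (A : comNzRingType) (q : nat).

Section OneMap.
Variables (phi : A -> A) (phiF : frob_hom q phi).

Lemma frob_homD x y : phi (x + y) = phi x + phi y.
Proof. by case: phiF. Qed.

Lemma frob_homZ r x : phi (r ^+ q * x) = r * phi x.
Proof. by case: phiF. Qed.

Lemma frob_hom0 : phi 0 = 0.
Proof. by apply: (@addrI _ (phi 0)); rewrite -frob_homD !addr0. Qed.

Lemma frob_homB x y : phi (x - y) = phi x - phi y.
Proof.
by apply: (@addrI _ (phi y)); rewrite -frob_homD addrC subrK addrC subrK.
Qed.

Lemma frob_hom_sum (I : Type) (r : seq I) (P : pred I) (F : I -> A) :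
  phi (\sum_(i <- r | P i) F i) = \sum_(i <- r | P i) phi (F i).
Proof. exact: (big_morph phi frob_homD frob_hom0). Qed.

End OneMap.

Lemma frob_hom_premul (c : A) phi : frob_hom q phi -> frob_hom q (fun x => phi (c * x)).
Proof.
move=> phiF; split=> [x y|r x]; first by rewrite mulrDr (frob_homD phiF).
by rewrite mulrCA (frob_homZ phiF).
Qed.

End FrobeniusLinear.

Definition is_ideal (A : comNzRingType) (J : A -> Prop) :=
  [/\ J 0, (forall x y, J x -> J y -> J (x + y)) & (forall x y, J y -> J (x * y))].

Lemma frob_hom_frob_power (A : comNzRingType) (q : nat) (J : A -> Prop) phi v :
  is_ideal J -> frob_hom q phi -> frob_power q J v -> J (phi v).
Proof.
move=> [J0 JD JM] phiF [s [sJ ->]]; rewrite (frob_hom_sum phiF) big_seq.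
apply: (big_ind J) => // x xs.
by rewrite mulrC (frob_homZ phiF) mulrC; apply/JM/sJ.
Qed.

(* A basis [fb_vec] of S over S^q, read through S^{1/q} ~ S, with a generator
   [fb_trace] of Hom_S(S^{1/q}, S) such that the coordinates of v are the
   q-th roots fb_trace (fb_dual b * v). *)
Record frob_basis (S : comNzRingType) (q : nat) := FrobBasis {
  fb_index : finType;
  fb_vec : fb_index -> S;
  fb_dual : fb_index -> S;
  fb_trace : S -> S;
  fb_trace_hom : frob_hom q fb_trace;
  fb_decomp : forall v, v = \sum_b fb_trace (fb_dual b * v) ^+ q * fb_vec b }.
Arguments fb_vec {S q} f b : rename.
Arguments fb_dual {S q} f b : rename.

Section FrobBasisTheory.
Variables (S : comNzRingType) (q : nat) (fb : frob_basis S q).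
Local Notation T := (fb_trace fb).
Local Notation TF := (fb_trace_hom fb).

Lemma frob_power_of_traces (J : S -> Prop) v :
  (forall b, J (T (fb_dual fb b * v))) -> frob_power q J v.
Proof.
move=> HJ; exists [seq (fb_vec fb b, T (fb_dual fb b * v)) | b <- index_enum _].
split; first by move=> x /mapP [b _ ->]; exact: HJ.
by rewrite big_map {1}(fb_decomp fb v); apply: eq_bigr => b _; rewrite mulrC.
Qed.

Lemma colon_frob_powerP (J : S -> Prop) u : is_ideal J ->
  colon (frob_power q J) J u <-> forall g, J g -> J (T (u * g)).
Proof.
move=> IJ; split=> [Hu g Jg | HT g Jg].
  exact: frob_hom_frob_power IJ TF (Hu g Jg).
apply: frob_power_of_traces => b; rewrite mulrCA; apply: HT.
by case: IJ => _ _; apply.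
Qed.

Lemma frob_hom_traceE psi : frob_hom q psi ->
  forall v, psi v = T ((\sum_b psi (fb_vec fb b) ^+ q * fb_dual fb b) * v).
Proof.
move=> psiF v; rewrite mulr_suml (frob_hom_sum TF) {1}(fb_decomp fb v).
rewrite (frob_hom_sum psiF); apply: eq_bigr => b _.
by rewrite (frob_homZ psiF) -mulrA (frob_homZ TF) mulrC.
Qed.

Lemma fb_trace_expand y :
  T y = \sum_b T (fb_dual fb b * y) * T (fb_vec fb b).
Proof.
rewrite {1}(fb_decomp fb y) (frob_hom_sum TF).
by apply: eq_bigr => b _; rewrite (frob_homZ TF).
Qed.

End FrobBasisTheory.

Section QuotientMaps.
Variables (S R : comNzRingType) (pi : {rmorphism S -> R}) (q : nat).
Hypothesis pi_surj : forall r, exists f, pi f = r.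

Let sec_ex r : exists f, pi f == r.
Proof. by have [f <-] := pi_surj r; exists f. Qed.
Let sec r : S := xchoose (sec_ex r).
Let secK r : pi (sec r) = r := eqP (xchooseP (sec_ex r)).

Lemma frob_hom_descend psi : frob_hom q psi ->
  (forall f, pi f = 0 -> pi (psi f) = 0) ->
  exists phi, frob_hom q phi /\ forall f, phi (pi f) = pi (psi f).
Proof.
move=> psiF psiK.
have psi_compat f g : pi f = pi g -> pi (psi f) = pi (psi g).
  move=> /eqP; rewrite -subr_eq0 -rmorphB => /eqP /psiK.
  by rewrite (frob_homB psiF) rmorphB => /eqP; rewrite subr_eq0 => /eqP.
exists (fun r => pi (psi (sec r))); split; last by move=> f; apply/psi_compat/secK.
split=> [x y | r x].
  by rewrite -rmorphD -(frob_homD psiF); apply: psi_compat; rewrite rmorphD !secK.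
rewrite -[r in RHS]secK -rmorphM -(frob_homZ psiF); apply: psi_compat.
by rewrite rmorphM rmorphXn !secK.
Qed.

Lemma frob_hom_lift (fb : frob_basis S q) phi : frob_hom q phi ->
  exists psi, frob_hom q psi /\ forall f, pi (psi f) = phi (pi f).
Proof.
move=> phiF.
exists (fun f => \sum_b fb_trace fb (fb_dual fb b * f) * sec (phi (pi (fb_vec fb b)))).
split.
  split=> [x y | r x].
    rewrite -big_split; apply: eq_bigr => b _.
    by rewrite mulrDr (frob_homD (fb_trace_hom fb)) mulrDl.
  rewrite mulr_sumr; apply: eq_bigr => b _.
  by rewrite mulrCA (frob_homZ (fb_trace_hom fb)) mulrA.
move=> f; rewrite rmorph_sum {2}(fb_decomp fb f) rmorph_sum (frob_hom_sum phiF).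
apply: eq_bigr => b _; rewrite rmorphM secK rmorphM rmorphXn.
by rewrite (frob_homZ phiF).
Qed.

Section Fedder.
Variables (I J : S -> Prop) (fb : frob_basis S q).
Hypotheses (I_ker : forall f, I f <-> pi f = 0) (J_ideal : is_ideal J)
  (ker_J : forall f, pi f = 0 -> J f).

Let I_ideal : is_ideal I.
Proof.
split=> [|x y|x y]; rewrite !I_ker; first exact: rmorph0.
  by rewrite rmorphD => -> ->; rewrite addr0.
by rewrite rmorphM => ->; rewrite mulr0.
Qed.

Lemma frob_hom_image_subP :
  (forall g, J g -> forall phi, frob_hom q phi ->
     exists f, J f /\ pi f = phi (pi g)) <->
  subideal (colon (frob_power q I) I) (colon (frob_power q J) J).
Proof.
have TF := fb_trace_hom fb.
split=> [Himg u | Hcol g Jg phi phiF].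
  rewrite (colon_frob_powerP fb _ I_ideal) (colon_frob_powerP fb _ J_ideal).
  move=> uI g Jg; have psiF := frob_hom_premul u TF.
  have psiK f : pi f = 0 -> pi (fb_trace fb (u * f)) = 0.
    by move=> /I_ker /uI /I_ker.
  have [phi [phiF phiE]] := frob_hom_descend psiF psiK.
  have [f [Jf fE]] := Himg g Jg phi phiF.
  have Jdiff : J (fb_trace fb (u * g) - f).
    by apply: ker_J; rewrite rmorphB fE phiE subrr.
  by case: J_ideal => _ JD _; rewrite -(subrK f (fb_trace fb _)); apply: JD.
have [psi [psiF psiE]] := frob_hom_lift fb phiF.
have uI : colon (frob_power q I) I (\sum_b psi (fb_vec fb b) ^+ q * fb_dual fb b).
  apply/(colon_frob_powerP fb _ I_ideal) => i /I_ker i0.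
  by apply/I_ker; rewrite -(frob_hom_traceE fb psiF) psiE i0 (frob_hom0 phiF).
move: (Hcol _ uI); rewrite (colon_frob_powerP fb _ J_ideal) => /(_ g Jg).
by rewrite -(frob_hom_traceE fb psiF) => Jpsi; exists (psi g).
Qed.
End Fedder.
End QuotientMaps.

Lemma sum_pair (A B : finType) (V : nmodType) (F : A * B -> V) :
  \sum_ab F ab = \sum_a \sum_b F (a, b).
Proof. by rewrite pair_bigA; apply: eq_bigr => -[]. Qed.

Section CharP.
Variables (S : comNzRingType) (p : nat) (pS : p \in [pchar S]).

Lemma exprD_pchar (x y : S) : (x + y) ^+ p = x ^+ p + y ^+ p.
Proof. exact: (rmorphD (pFrobenius_aut pS)). Qed.

Lemma exprB_pchar (x y : S) : (x - y) ^+ p = x ^+ p - y ^+ p.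
Proof. exact: (rmorphB (pFrobenius_aut pS)). Qed.

Lemma expr_sum_pchar (I : Type) (r : seq I) (P : pred I) (F : I -> S) :
  (\sum_(i <- r | P i) F i) ^+ p = \sum_(i <- r | P i) F i ^+ p.
Proof. exact: (rmorph_sum (pFrobenius_aut pS)). Qed.

Lemma pchar_gt0 : (0 < p)%N.
Proof. exact/prime_gt0/(pcharf_prime pS). Qed.

Lemma frob_basis_comp q : frob_basis S p -> frob_basis S q -> frob_basis S (q * p).
Proof.
move=> [B1 e1 d1 T1 T1F dec1] [B2 e2 d2 T2 T2F dec2].
apply: (@FrobBasis _ _ (B1 * B2)%type (fun bc => e2 bc.2 ^+ p * e1 bc.1)
  (fun bc => d2 bc.2 ^+ p * d1 bc.1) (fun v => T2 (T1 v))).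
  split=> [x y|r x]; first by rewrite (frob_homD T1F) (frob_homD T2F).
  by rewrite exprM (frob_homZ T1F) (frob_homZ T2F).
move=> v; rewrite sum_pair {1}(dec1 v); apply: eq_bigr => b _.
rewrite {1}(dec2 (T1 (d1 b * v))) expr_sum_pchar mulr_suml.
apply: eq_bigr => c _; rewrite -mulrA (frob_homZ T1F).
by rewrite exprMn -exprM mulrA.
Qed.

End CharP.

Lemma frob_basis1 (S : comNzRingType) : frob_basis S 1.
Proof.
apply: (@FrobBasis _ _ unit (fun _ => 1) (fun _ => 1) id).
  by split=> // r x; rewrite expr1.
by move=> v; rewrite big_const card_unit iter_addr addr0 expr1 mulr1 mul1r.
Qed.

Lemma frob_basis_exp (S : comNzRingType) p : p \in [pchar S] ->
  frob_basis S p -> forall e, frob_basis S (p ^ e).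
Proof.
move=> pS fb; elim=> [|e fbe]; first by rewrite expn0; apply: frob_basis1.
by rewrite expnSr; apply: frob_basis_comp.
Qed.

Definition frob_spanning (A : comNzRingType) (q : nat) (B : finType) (e : B -> A) :=
  forall v, exists g : B -> A, v = \sum_b g b ^+ q * e b.

Definition frob_free (A : comNzRingType) (q : nat) (B : finType) (e : B -> A) :=
  forall g : B -> A, \sum_b g b ^+ q * e b = 0 -> forall b, g b = 0.

Section DualFrobBasis.
Variables (S : comNzRingType) (q : nat) (B : finType) (e : B -> S).
Hypothesis e_span : frob_spanning q e.
Variables (T : S -> S) (t : B -> S).
Hypotheses (TF : frob_hom q T) (t_dual : forall b c, T (t b * e c) = (b == c)%:R).

Lemma dual_coordE (g : B -> S) b : T (t b * \sum_c g c ^+ q * e c) = g b.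
Proof.
rewrite mulr_sumr (frob_hom_sum TF) (bigD1 b) //= big1 => [|c cb].
  by rewrite mulrCA (frob_homZ TF) t_dual eqxx mulr1 addr0.
by rewrite mulrCA (frob_homZ TF) t_dual eq_sym (negbTE cb) mulr0.
Qed.

Lemma dual_decomp v : v = \sum_b T (t b * v) ^+ q * e b.
Proof.
have [g ->] := e_span v; apply: eq_bigr => b _.
by rewrite dual_coordE.
Qed.

Definition dual_frob_basis : frob_basis S q := FrobBasis TF dual_decomp.

End DualFrobBasis.

Section FreeFrobBasis.
Variables (S : comNzRingType) (p : nat) (pS : p \in [pchar S]).
Variables (B : finType) (e : B -> S).
Hypotheses (e_span : frob_spanning p e) (e_free : frob_free p e).

Definition coord (b : B) (v : S) : S :=
  proj1_sig (constructive_indefinite_description _ (e_span v)) b.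

Lemma coordE v : v = \sum_b coord b v ^+ p * e b.
Proof. exact: proj2_sig (constructive_indefinite_description _ (e_span v)). Qed.

Lemma coord_uniq (g : B -> S) v : v = \sum_b g b ^+ p * e b -> forall b, coord b v = g b.
Proof.
move=> vE b; apply/eqP; rewrite -subr_eq0; apply/eqP.
apply: (e_free (g := fun b => coord b v - g b)).
under eq_bigr => i _ do rewrite (exprB_pchar pS) mulrBl.
by rewrite sumrB -coordE -vE subrr.
Qed.

Lemma coord_hom b : frob_hom p (coord b).
Proof.
split=> [x y|r x].
  apply: (coord_uniq (g := fun b => coord b x + coord b y)).
  under eq_bigr => i _ do rewrite (exprD_pchar pS) mulrDl.
  by rewrite big_split /= -!coordE.
apply: (coord_uniq (g := fun b => r * coord b x)).
under eq_bigr => i _ do rewrite exprMn -mulrA.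
by rewrite -mulr_sumr -coordE.
Qed.

End FreeFrobBasis.

Definition biorthogonal (A : comNzRingType) (q : nat) (fb : frob_basis A q) :=
  forall b c, fb_trace fb (fb_dual fb b * fb_vec fb c) = (b == c)%:R.

Section FFiniteField.
Variables (K : fieldType) (p : nat) (pK : p \in [pchar K]).

Lemma frob_spanning_drop N (s c : 'I_N.+1 -> K) k :
  frob_spanning p s -> \sum_i c i ^+ p * s i = 0 -> c k != 0 ->
  frob_spanning p (fun i => s (lift k i)).
Proof.
move=> s_span c_rel ck x; have [g ->] := s_span x.
exists (fun i => g (lift k i) - (g k / c k) * c (lift k i)).
move: c_rel; rewrite !(bigD1_ord k) //= => c_rel.
under [RHS]eq_bigr => i _ do rewrite (exprB_pchar pK) exprMn mulrBl -mulrA.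
rewrite sumrB -mulr_sumr.
have -> : \sum_(i < N) c (lift k i) ^+ p * s (lift k i) = - (c k ^+ p * s k).
  by apply/eqP; rewrite -addr_eq0 addrC c_rel.
rewrite expr_div_n; field.
by rewrite expf_neq0.
Qed.

Lemma frob_free_spanning_exists N (s : 'I_N -> K) : frob_spanning p s ->
  exists N' (s' : 'I_N' -> K), frob_spanning p s' /\ frob_free p s'.
Proof.
elim: N s => [|N IH] s s_span; first by exists 0%N, s; split => // c _ [].
have [s_free | s_dep] := classic (frob_free p s); first by exists N.+1, s.
have [c [c_rel [k ck]]] : exists c : 'I_N.+1 -> K,
    \sum_i c i ^+ p * s i = 0 /\ exists k, c k != 0.
  apply: NNPP => no_rel; apply: s_dep => c c_rel i.
  by have [//|ci] := eqVneq (c i) 0; case: no_rel; exists c; split => //; exists i.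
exact: IH (frob_spanning_drop s_span c_rel ck).
Qed.

Section Gram.
Variables (N : nat) (s : 'I_N -> K) (s_span : frob_spanning p s) (s_free : frob_free p s).
Variable j0 : 'I_N.
Local Notation T := (coord s_span j0).
Let TF : frob_hom p T := coord_hom pK s_span s_free j0.

Lemma coord_gram_unitmx : \matrix_(i, k) T (s i * s k) \in unitmx.
Proof.
rewrite -row_free_unit; apply: inj_row_free => v vG0.
pose w := \sum_i v 0 i ^+ p * s i.
have Tws k : T (w * s k) = 0.
  have := congr1 (fun M : 'rV[K]_N => M 0 k) vG0; rewrite !mxE => <-.
  rewrite /w mulr_suml (frob_hom_sum TF); apply: eq_bigr => i _.
  by rewrite -mulrA (frob_homZ TF) mxE.
have Tw y : T (w * y) = 0.
  rewrite (coordE s_span y) mulr_sumr (frob_hom_sum TF) big1 // => k _.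
  by rewrite mulrCA (frob_homZ TF) Tws mulr0.
have w0 : w = 0.
  apply/eqP/negP => /negP wN0.
  have := Tw (w^-1 * s j0); rewrite mulrA mulfV // mul1r.
  rewrite (coord_uniq pK s_span s_free (g := fun i => (i == j0)%:R)) ?eqxx => [/eqP|].
    by rewrite oner_eq0.
  rewrite (bigD1 j0) //= eqxx expr1n mul1r big1 ?addr0 // => i /negbTE ->.
  by rewrite expr0n gtn_eqF ?(pchar_gt0 pK) // mul0r.
by apply/rowP => i; rewrite mxE; apply: (s_free w0).
Qed.

Lemma coord_dual_basis_exists :
  exists fb : frob_basis K p, biorthogonal fb.
Proof.
pose C := invmx (\matrix_(i, k) T (s i * s k)).
pose d j := \sum_i C j i ^+ p * s i.
have d_dual j k : T (d j * s k) = (j == k)%:R.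
  rewrite mulr_suml (frob_hom_sum TF).
  have := congr1 (fun M : 'M[K]_N => M j k) (mulVmx coord_gram_unitmx).
  rewrite !mxE => <-; apply: eq_bigr => i _.
  by rewrite -mulrA (frob_homZ TF) mxE.
by exists (dual_frob_basis s_span TF d_dual).
Qed.

End Gram.

Lemma field_frob_basis_exists : Ffinite_field p K ->
  exists fb : frob_basis K p, biorthogonal fb.
Proof.
move=> [s0 s0_span].
have s0_span' : frob_spanning p (fun i : 'I_(size s0) => s0`_i).
  by move=> x; have [c [_ ->]] := s0_span x; exists (fun i : 'I_(size s0) => c`_i).
have [[|N] [s [s_span s_free]]] := frob_free_spanning_exists s0_span'.
  by have [g] := s_span 1; rewrite big_ord0 => /eqP; rewrite oner_eq0.
exact: (coord_dual_basis_exists s_span s_free ord0).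
Qed.

End FFiniteField.

Lemma modn_pred_addB p x y : (x < p)%N -> (y < p)%N ->
  ((p.-1 - x + y) %% p == p.-1)%N = (x == y).
Proof.
move=> xp yp.
case: (ltngtP x y) => Hxy.
- have -> : (p.-1 - x + y = (y - x).-1 + p)%N by lia.
  rewrite modnDr modn_small; last by lia.
  by apply/negbTE/eqP; lia.
- by rewrite modn_small; [apply/negbTE/eqP; lia | lia].
- by rewrite Hxy modn_small; [apply/eqP; lia | lia].
Qed.

Section MpolyFrobBasis.
Variables (K : fieldType) (n p : nat) (pK : p \in [pchar K]).
Variables (fbK : frob_basis K p) (fbK_bi : biorthogonal fbK).

Local Notation S := {mpoly K[n]}.
Local Notation BK := (fb_index fbK).
Local Notation s := (fb_vec fbK).
Local Notation TK := (fb_trace fbK).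
Local Notation cK j x := (TK (fb_dual fbK j * x)).
Local Notation AT := {ffun 'I_n -> 'I_p}.

Let p0 : (0 < p)%N := pchar_gt0 pK.
Let pS : p \in [pchar S] := rmorph_pchar (@mpolyC n K) pK.
Let cK_hom j : frob_hom p (fun x => cK j x) := frob_hom_premul _ (fb_trace_hom fbK).

Lemma cK_uniq (g : BK -> K) j : cK j (\sum_i g i ^+ p * s i) = g j.
Proof. exact: dual_coordE (fb_trace_hom fbK) fbK_bi g j. Qed.

Definition small_mnm (a : AT) : 'X_{1..n} := [multinom (a i : nat) | i < n].
Definition mnm_div (c : 'X_{1..n}) : 'X_{1..n} := [multinom (c i %/ p)%N | i < n].
Definition mnm_mod (c : 'X_{1..n}) : AT := [ffun i => Ordinal (ltn_pmod (c i) p0)].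

Lemma mnm_divmod c : c = (mnm_div c *+ p + small_mnm (mnm_mod c))%MM.
Proof. by apply/mnmP => i; rewrite mnmDE mulmnE !mnmE ffunE /= -divn_eq. Qed.

Lemma mnm_divK m a : mnm_div (m *+ p + small_mnm a)%MM = m.
Proof.
by apply/mnmP => i; rewrite mnmE mnmDE mulmnE mnmE divnMDl // divn_small ?addn0.
Qed.

Lemma mnm_modK m a : mnm_mod (m *+ p + small_mnm a)%MM = a.
Proof.
apply/ffunP => i; apply/val_inj; rewrite ffunE /= mnmDE mulmnE mnmE modnMDl.
by rewrite modn_small // ltn_ord.
Qed.

Lemma eq_mnm_divmod m a m' a' :
  ((m *+ p + small_mnm a)%MM == (m' *+ p + small_mnm a')%MM) = (m == m') && (a == a').
Proof.
apply/eqP/andP => [E|[/eqP -> /eqP ->]] //.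
by split; apply/eqP; [rewrite -(mnm_divK m a) E mnm_divK | rewrite -(mnm_modK m a) E mnm_modK].
Qed.

Lemma mpoly_exprp (g : S) : g ^+ p = \sum_(m <- msupp g) (g@_m ^+ p) *: 'X_[m *+ p].
Proof.
rewrite {1}(mpolyE g) (expr_sum_pchar pS); apply: eq_bigr => m _.
by rewrite exprZn mpolyXn.
Qed.

Definition mpoly_pvec (b : AT * BK) : S := 'X_[small_mnm b.1] * (s b.2)%:MP.

Lemma mcoeff_exprp_pvec (g : S) a j m' a' :
  (g ^+ p * mpoly_pvec (a, j))@_(m' *+ p + small_mnm a')%MM =
  if a == a' then g@_m' ^+ p * s j else 0.
Proof.
rewrite mpoly_exprp mulr_suml /mpoly_pvec /=.
have E m : g@_m ^+ p *: 'X_[m *+ p] * ('X_[small_mnm a] * (s j)%:MP)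
           = (g@_m ^+ p * s j) *: 'X_[(m *+ p + small_mnm a)%MM].
  by rewrite -scalerAl mpolyXD mulrA mulrC mul_mpolyC scalerA.
rewrite (eq_bigr _ (fun m _ => E m)) raddf_sum /=.
under eq_bigr => m _ do rewrite mcoeffZ mcoeffX eq_mnm_divmod.
case: (a == a'); last by rewrite big1 // => m _; rewrite andbF mulr0.
under eq_bigr => m _ do rewrite andbT.
have [m'g | m'Ng] := boolP (m' \in msupp g).
  rewrite (bigD1_seq m') ?msupp_uniq //= eqxx mulr1 big1 ?addr0 // => m /negbTE ->.
  by rewrite mulr0.
rewrite big_seq big1 => [|m mg]; last first.
  by rewrite (_ : (m == m') = false) ?mulr0 //; apply/negbTE; apply: contra m'Ng => /eqP <-.
move: m'Ng; rewrite mcoeff_msupp negbK => /eqP ->.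
by rewrite expr0n gtn_eqF // mul0r.
Qed.

Lemma mpoly_pvec_free : frob_free p mpoly_pvec.
Proof.
move=> g g_rel [a' j']; apply/mpolyP => m'; rewrite mcoeff0.
have := congr1 (mcoeff (m' *+ p + small_mnm a')%MM) g_rel.
rewrite (big_morph _ (mcoeffD _) (mcoeff0 _ _)) mcoeff0 sum_pair.
under eq_bigr => a _ do under eq_bigr => j _ do rewrite mcoeff_exprp_pvec.
rewrite (bigD1 a') //= [X in _ + X]big1 ?addr0; last first.
  by move=> a aN; rewrite big1 // => j _; rewrite (negbTE aN).
under eq_bigr => j _ do rewrite eqxx.
by move/(congr1 (fun x => cK j' x)); rewrite cK_uniq (frob_hom0 (cK_hom j')).
Qed.

Definition mono_coord c (k : K) (b : AT * BK) : S :=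
  if b.1 == mnm_mod c then (cK b.2 k)%:MP * 'X_[mnm_div c] else 0.

Lemma mono_decomp c (k : K) : 'X_[c] * k%:MP = \sum_b mono_coord c k b ^+ p * mpoly_pvec b.
Proof.
rewrite sum_pair (bigD1 (mnm_mod c)) //= [X in _ + X]big1 ?addr0; last first.
  move=> a aN; rewrite big1 // => j _; rewrite /mono_coord /= (negbTE aN).
  by rewrite expr0n gtn_eqF // mul0r.
have E j : mono_coord c k (mnm_mod c, j) ^+ p * mpoly_pvec (mnm_mod c, j) =
           (cK j k ^+ p * s j)%:MP * 'X_[c].
  rewrite /mono_coord /mpoly_pvec /= eqxx exprMn -rmorphXn mpolyXn.
  by rewrite [_ * (s j)%:MP]mulrC mulrACA -mpolyCM -mpolyXD -mnm_divmod.
by rewrite (eq_bigr _ (fun j _ => E j)) -mulr_suml -rmorph_sum -(fb_decomp fbK) mulrC.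
Qed.

Lemma mpoly_pvec_spanning : frob_spanning p mpoly_pvec.
Proof.
pose Spanned (v : S) := exists g : AT * BK -> S, v = \sum_b g b ^+ p * mpoly_pvec b.
have Spanned0 : Spanned 0.
  exists (fun _ => 0); rewrite big1 // => b _; by rewrite expr0n gtn_eqF // mul0r.
have SpannedD x y : Spanned x -> Spanned y -> Spanned (x + y).
  move=> [g ->] [h ->]; exists (fun b => g b + h b).
  by rewrite -big_split; apply: eq_bigr => b _; rewrite (exprD_pchar pS) mulrDl.
move=> v; rewrite (mpolyE v); apply: (big_ind Spanned) => // m _.
by exists (mono_coord m v@_m); rewrite -mono_decomp mulrC mul_mpolyC.
Qed.

Local Notation pcoord := (coord mpoly_pvec_spanning).

Let pcoord_hom b : frob_hom p (pcoord b) := coord_hom pS mpoly_pvec_spanning mpoly_pvec_free b.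

Lemma pcoord_mono c k b : pcoord b ('X_[c] * k%:MP) = mono_coord c k b.
Proof. exact: (coord_uniq pS mpoly_pvec_spanning mpoly_pvec_free (mono_decomp c k)). Qed.

Definition mnm_top : 'X_{1..n} := [multinom p.-1 | i < n].
Definition mnm_compl (a : AT) : 'X_{1..n} := [multinom (p.-1 - a i)%N | i < n].

Lemma mnm_mod_compl a a' :
  (mnm_mod (mnm_compl a + small_mnm a')%MM == mnm_mod mnm_top) = (a == a').
Proof.
have ptop : (p.-1 < p)%N by rewrite prednK.
apply/eqP/eqP => [E|<-].
  apply/ffunP => i; apply/val_inj; have := congr1 (fun f : AT => val (f i)) E.
  rewrite !ffunE /= mnmDE !mnmE (modn_small ptop) => /eqP.
  by rewrite modn_pred_addB ?ltn_ord // => /eqP.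
apply/ffunP => i; apply/val_inj; rewrite !ffunE /= mnmDE !mnmE (modn_small ptop).
by apply/eqP; rewrite modn_pred_addB ?ltn_ord.
Qed.

Lemma mnm_div_compl a : mnm_div (mnm_compl a + small_mnm a)%MM = 0%MM.
Proof.
apply/mnmP => i; rewrite !mnmE subnK; last by rewrite -ltnS prednK ?ltn_ord.
by rewrite divn_small ?prednK.
Qed.

(* The top block coordinate (at x^{(p-1,...,p-1)}) followed by the trace of K. *)
Definition mpoly_trace (f : S) : S :=
  \sum_j pcoord (mnm_mod mnm_top, j) f * (TK (s j))%:MP.

Definition mpoly_pdual (b : AT * BK) : S :=
  'X_[mnm_compl b.1] * (fb_dual fbK b.2)%:MP.

Lemma mpoly_trace_hom : frob_hom p mpoly_trace.
Proof.
split=> [x y|r x]; rewrite /mpoly_trace.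
  by rewrite -big_split; apply: eq_bigr => j _; rewrite (frob_homD (pcoord_hom _)) mulrDl.
by rewrite mulr_sumr; apply: eq_bigr => j _; rewrite (frob_homZ (pcoord_hom _)) mulrA.
Qed.

Lemma mpoly_trace_dual b c :
  mpoly_trace (mpoly_pdual b * mpoly_pvec c) = (b == c)%:R.
Proof.
case: b c => [a j] [a' k]; rewrite /mpoly_pdual /mpoly_pvec /= mulrACA.
rewrite -mpolyXD -mpolyCM /mpoly_trace.
under eq_bigr do rewrite pcoord_mono /mono_coord /= eq_sym mnm_mod_compl.
rewrite xpair_eqE; case: eqP => [<- | _] /=; last first.
  by rewrite big1 // => i _; rewrite mul0r.
under eq_bigr do rewrite mnm_div_compl mpolyX0 mulr1 -mpolyCM.
by rewrite -rmorph_sum -fb_trace_expand fbK_bi rmorph_nat.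
Qed.

Definition mpoly_frob_basis : frob_basis S p :=
  dual_frob_basis mpoly_pvec_spanning mpoly_trace_hom mpoly_trace_dual.

End MpolyFrobBasis.

Lemma hmax_ideal (K : fieldType) (n : nat) : is_ideal (@hmax K n).
Proof.
rewrite /hmax; split=> [|x y hx hy|x y hy]; first exact: mcoeff0.
  by rewrite mcoeffD hx hy addr0.
by rewrite ((mcoeff0_is_multiplicative _ _).1 x y) hy mulr0.
Qed.

Lemma homog_comp0 (K : fieldType) (n : nat) (f : {mpoly K[n]}) :
  homog_comp 0 f = (f@_0)%:MP.
Proof.
rewrite /homog_comp; under eq_bigl => m do rewrite mdeg_eq0.
have [f0 | f0] := boolP (0%MM \in msupp f).
  rewrite big_mkcond (bigD1_seq 0%MM) ?msupp_uniq //= eqxx big1 ?addr0.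
    by rewrite mpolyX0 -alg_mpolyC.
  by move=> m /negbTE ->.
rewrite big_seq_cond big1 => [|m /andP [mf /eqP m0]]; last by move: f0; rewrite -m0 mf.
by move: f0; rewrite mcoeff_msupp negbK => /eqP ->; rewrite mpolyC0.
Qed.

Lemma homogeneous_ker_hmax (K : fieldType) (n : nat) (R : comNzRingType)
    (pi : {rmorphism {mpoly K[n]} -> R}) (I : {mpoly K[n]} -> Prop) :
  (forall f, I f <-> pi f = 0) -> homogeneous_ideal I ->
  forall f, pi f = 0 -> hmax f.
Proof.
move=> I_ker I_homog f /I_ker /(I_homog _ 0%N); rewrite homog_comp0 => /I_ker c0.
apply/eqP/negP => /negP cN0.
have : pi ((f@_0)^-1 * f@_0)%:MP = 0 by rewrite mpolyCM rmorphM c0 mulr0.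
by rewrite mulVf // mpolyC1 rmorph1 => /eqP; rewrite oner_eq0.
Qed.

Theorem lemma4p1 (p : nat) (K : fieldType) (n : nat) (I : {mpoly K[n]} -> Prop)
    (R : comNzRingType) (pi : {rmorphism {mpoly K[n]} -> R}) :
  prime p -> p \in [pchar K] -> Ffinite_field p K ->
  (forall r : R, exists f, pi f = r) -> (forall f, I f <-> pi f = 0) ->
  homogeneous_ideal I -> Fpure R p ->
  let m : R -> Prop := fun r => exists f, hmax f /\ pi f = r in
  (forall r, splitting_prime p m r <-> m r) <->
  (forall e : nat, subideal (colon (frob_power (p ^ e) I) I)
                            (colon (frob_power (p ^ e) (@hmax K n)) (@hmax K n))).
Proof.
move=> _ pK K_ffin pi_surj I_ker I_homog _ m.
have ker_hmax := homogeneous_ker_hmax I_ker I_homog.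
have [fbK fbK_bi] := field_frob_basis_exists pK K_ffin.
have pS : p \in [pchar {mpoly K[n]}] := rmorph_pchar (@mpolyC n K) pK.
have fb e := frob_basis_exp pS (mpoly_frob_basis n pK fbK_bi) e.
have colonE e := frob_hom_image_subP pi_surj (fb e) I_ker (hmax_ideal K n) ker_hmax.
split=> [Pm e | Hcol r].
  by apply/colonE => g g0 phi phiF; apply: ((Pm (pi g)).2 (ex_intro _ g (conj g0 erefl)) e).
split; first by move=> /(_ 0%N id); rewrite expn0; apply; split => // r x; rewrite expr1.
by move=> [g [g0 <-]] e phi phiF; apply: (colonE e).2 (Hcol e) g g0 phi phiF.
Qed.
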